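(* Let $\mathcal{D}$ be a $\{K_3,K_4\}$-decomposition of $K_{18}$ with $\alpha=13$, let $W$ be the set of vertices $x$ with $\alpha_x\ge 2$, and for $i\in\{0,1,2,3\}$ let $t_i$ be the number of copies of $K_3$ in $\mathcal{D}$ having exactly $i$ vertices in $W$. Then $(t_0,t_1,t_2,t_3)\neq(0,4,3,6)$.
   Context: A $\{K_3,K_4\}$-decomposition of $K_v$ is a collection of subgraphs, each isomorphic to $K_3$ or $K_4$, such that every edge of $K_v$ lies in exactly one of them. $\alpha$ is the number of copies of $K_3$ in the decomposition, and for a vertex $x$, $\alpha_x$ is the number of copies of $K_3$ in the decomposition containing $x$. *)

From mathcomp Require Import all_boot all_order.
Set Implicit Arguments. Unset Strict Implicit. Unset Printing Implicit Defensive.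

(* A {K3,K4}-decomposition of K_v on vertex set 'I_v: a set of blocks (vertex
   sets of the copies of K3/K4), each of size 3 or 4, such that every edge
   {x,y} (x <> y) of K_v lies in exactly one block. *)
Definition is_K34_decomp (v : nat) (D : {set {set 'I_v}}) : Prop :=
  (forall B, B \in D -> #|B| = 3 \/ #|B| = 4) /\
  (forall x y : 'I_v, x != y -> #|[set B in D | (x \in B) && (y \in B)]| = 1).

Definition triangles (v : nat) (D : {set {set 'I_v}}) : {set {set 'I_v}} :=
  [set B in D | #|B| == 3].

Definition alpha (v : nat) (D : {set {set 'I_v}}) : nat := #|triangles D|.

Definition alpha_at (v : nat) (D : {set {set 'I_v}}) (x : 'I_v) : nat :=
  #|[set B in triangles D | x \in B]|.

Definition Wset (v : nat) (D : {set {set 'I_v}}) : {set 'I_v} :=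
  [set x | 2 <= alpha_at D x].

Definition t_count (v : nat) (D : {set {set 'I_v}}) (i : nat) : nat :=
  #|[set B in triangles D | #|B :&: Wset D| == i]|.

From mathcomp Require Import all_boot all_order.
From mathcomp Require Import zify.

Set Implicit Arguments.
Unset Strict Implicit.
Unset Printing Implicit Defensive.

(* Every vertex x sees 17 = 2 alpha_x + 3 beta_x other vertices, where beta_x counts the
   copies of K4 through x; as 3 does not divide 17, alpha_x >= 1.  So each vertex outside W
   lies on exactly one triangle, and the profile (0,4,3,6), with 11 triangle incidences
   outside W, forces |W| = 7.  Summing 2 alpha_x + 3 beta_x = 17 over W shows that the
   copies of K4 meet W in 21 incidences.  The triangles of the profile already cover
   3 + 18 = 21 = C(7,2) pairs inside W, so every K4 meets W at most once and there are at
   least 21 copies of K4; but counting edges, 3 * 13 + 6 * #K4 = 153 gives exactly 19. *)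

Lemma sum_incidences (T : finType) (F : {set {set T}}) (A : {set T})
    (f : {set T} -> nat) :
  \sum_(x in A) \sum_(B in F | x \in B) f B = \sum_(B in F) f B * #|B :&: A|.
Proof.
rewrite (exchange_big_dep (mem F)) => [|x B _ /andP[] //] /=.
apply: eq_bigr => B BF.
rewrite sum_nat_cond_const mulnC; congr (_ * _).
by apply: eq_card => x; rewrite !inE BF andbC.
Qed.

Definition quads (v : nat) (D : {set {set 'I_v}}) : {set {set 'I_v}} :=
  [set B in D | #|B| == 4].

Lemma card_triangle (v : nat) (D : {set {set 'I_v}}) B :
  B \in triangles D -> #|B| = 3.
Proof. by rewrite inE => /andP[_ /eqP]. Qed.

Lemma card_quad (v : nat) (D : {set {set 'I_v}}) B : B \in quads D -> #|B| = 4.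
Proof. by rewrite inE => /andP[_ /eqP]. Qed.

Lemma sum_alpha_at (v : nat) (D : {set {set 'I_v}}) (A : {set 'I_v}) :
  \sum_(x in A) alpha_at D x = \sum_(B in triangles D) #|B :&: A|.
Proof.
under [RHS]eq_bigr do rewrite -[#|_|]mul1n.
by rewrite -sum_incidences; apply: eq_bigr => x _; rewrite sum1dep_card.
Qed.

Lemma sum_triangles_t_count (v : nat) (D : {set {set 'I_v}}) (g : nat -> nat) :
  \sum_(B in triangles D) g #|B :&: Wset D| = \sum_(i < 4) g i * t_count D i.
Proof.
have small B : B \in triangles D -> #|B :&: Wset D| < 4.
  move/card_triangle=> cardB.
  by rewrite ltnS -cardB subset_leq_card // subsetIl.
rewrite (partition_big (fun B => inord #|B :&: Wset D| : 'I_4) predT) //.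
apply: eq_bigr => i _; rewrite /t_count mulnC -sum_nat_cond_const.
apply: eq_big => [B | B /andP[/small lt4 /eqP <-]]; last by rewrite inordK.
by case: (boolP (B \in _)) => //= /small lt4; rewrite -val_eqE /= inordK.
Qed.

Section K34Decomposition.

Variables (v : nat) (D : {set {set 'I_v}}).
Hypothesis block_size : forall B, B \in D -> #|B| = 3 \/ #|B| = 4.
Hypothesis edge_in_one_block : forall x y : 'I_v, x != y ->
  #|[set B in D | (x \in B) && (y \in B)]| = 1.

Lemma sum_blocks_split (f : {set 'I_v} -> nat) :
  \sum_(B in D) f B = \sum_(B in triangles D) f B + \sum_(B in quads D) f B.
Proof.
rewrite (big_setID [set B : {set _} | #|B| == 3]); congr (_ + _); apply: eq_bigl => B.
  by rewrite !inE andbC.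
rewrite !inE; case: (boolP (B \in D)) => [/block_size [] -> | _]; by rewrite ?andbF.
Qed.

Lemma sum_cardI_blocks_at (A : {set 'I_v}) x : x \in A ->
  \sum_(B in D | x \in B) #|B :&: A|.-1 = #|A|.-1.
Proof.
move=> xA.
have -> : \sum_(B in D | x \in B) #|B :&: A|.-1
        = \sum_(B in [set B in D | x \in B]) 1 * #|B :&: (A :\ x)|.
  apply: eq_big => [B | B /andP[_ xB]]; first by rewrite inE.
  by rewrite mul1n (cardsD1 x (B :&: A)) !inE xB xA /= setIDA.
rewrite -sum_incidences (cardsD1 x A) xA /= -sum1_card.
apply: eq_bigr => y; rewrite !inE => /andP[yx yA].
rewrite eq_sym in yx; rewrite sum1dep_card -(edge_in_one_block yx).
by apply: eq_card => B; rewrite !inE andbA.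
Qed.

Lemma sum_degree_at x : \sum_(B in D | x \in B) #|B|.-1 = v.-1.
Proof.
have := sum_cardI_blocks_at (in_setT x); rewrite cardsT card_ord.
by under eq_bigr do rewrite setIT.
Qed.

Lemma sum_pairs_in (A : {set 'I_v}) :
  \sum_(B in D) #|B :&: A|.-1 * #|B :&: A| = #|A|.-1 * #|A|.
Proof.
rewrite -sum_incidences.
under eq_bigr => x xA do rewrite (sum_cardI_blocks_at xA).
by rewrite sum_nat_const mulnC.
Qed.

Lemma sum_degrees_in (A : {set 'I_v}) :
  2 * \sum_(B in triangles D) #|B :&: A| + 3 * \sum_(B in quads D) #|B :&: A|
  = v.-1 * #|A|.
Proof.
have := sum_incidences D A (fun B => #|B|.-1).
under eq_bigr do rewrite sum_degree_at.
rewrite sum_nat_const mulnC sum_blocks_split => ->.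
rewrite !big_distrr; congr (_ + _); apply: eq_bigr => B.
  by move/card_triangle->.
by move/card_quad->.
Qed.

Lemma alpha_at_gt0 x : ~~ (3 %| v.-1) -> 0 < alpha_at D x.
Proof.
rewrite lt0n; apply: contra => /eqP/cards0_eq noT.
rewrite -(sum_degree_at x); apply: dvdn_sum => B /andP[BD xB].
case: (block_size BD) => cardB; last by rewrite cardB.
have : B \in [set B in triangles D | x \in B] by rewrite !inE BD cardB xB.
by rewrite noT inE.
Qed.

Lemma edge_count : 6 * alpha D + 12 * #|quads D| = v * v.-1.
Proof.
have := sum_degrees_in setT; rewrite cardsT card_ord.
under eq_bigr => B TB do rewrite setIT (card_triangle TB).
under [in X in _ + X = _]eq_bigr => B QB do rewrite setIT (card_quad QB).
by rewrite !sum_nat_const /alpha; lia.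
Qed.

Lemma card_outside_W : ~~ (3 %| v.-1) ->
  #|~: Wset D| = \sum_(B in triangles D) (3 - #|B :&: Wset D|).
Proof.
move=> ndvd.
have -> : #|~: Wset D| = \sum_(x in ~: Wset D) alpha_at D x.
  rewrite -sum1_card; apply: eq_bigr => x; rewrite !inE -ltnNge ltnS => le1.
  by apply/eqP; rewrite eqn_leq le1 alpha_at_gt0.
rewrite sum_alpha_at; apply: eq_bigr => B /card_triangle cardB.
by have := cardsID (Wset D) B; rewrite cardB setDE; lia.
Qed.

End K34Decomposition.

Theorem mainTheorem11 (D : {set {set 'I_18}}) :
  is_K34_decomp D -> alpha D = 13 ->
  (t_count D 0, t_count D 1, t_count D 2, t_count D 3) <> (0, 4, 3, 6).
Proof.
move=> [blockD edgeD] alpha13 [t0 t1 t2 t3].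
set W := Wset D.
have tsum g : \sum_(B in triangles D) g #|B :&: W| = g 1 * 4 + g 2 * 3 + g 3 * 6.
  by rewrite sum_triangles_t_count !big_ord_recr big_ord0 /= t0 t1 t2 t3 muln0.
have cardW : #|W| = 7.
  have := card_outside_W blockD edgeD isT; rewrite (tsum (fun i => 3 - i)) /=.
  by move=> outside; apply/eqP; rewrite -(eqn_add2r #|~: W|) cardsC card_ord outside.
have nquads : #|quads D| = 19.
  by have := edge_count blockD edgeD; rewrite alpha13; lia.
have quadsW : \sum_(Q in quads D) #|Q :&: W| = 21.
  by have := sum_degrees_in blockD edgeD W; rewrite cardW (tsum (fun i => i)); lia.
have quadW_le1 Q : Q \in quads D -> #|Q :&: W| <= 1.
  have := sum_pairs_in edgeD W; rewrite (sum_blocks_split blockD) cardW.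
  rewrite (tsum (fun i => i.-1 * i)) /= => pairs.
  have /eqP : \sum_(Q in quads D) #|Q :&: W|.-1 * #|Q :&: W| = 0.
    by apply: (@addnI 42); rewrite addn0; exact: pairs.
  rewrite sum_nat_eq0 => /forall_inP/(_ Q)-/[apply]/eqP.
  by case: #|Q :&: W| => [|[|n]].
have : \sum_(Q in quads D) #|Q :&: W| <= \sum_(Q in quads D) 1.
  exact: leq_sum.
by rewrite quadsW sum1_card nquads.
Qed.
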